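(* Let $(S,\mathsf d)$ be a complete separable metric space and $\mathbf p$ a Borel probability measure on it. For $\varepsilon>0$ and $k\in\mathbb{N}_0$ we have $0\le p_{\varepsilon,k}\le1$, $p_{\varepsilon,0}=0$, $p_{\varepsilon,1}=\int_S\mathbf p(B(x,\varepsilon))\,d\mathbf p(x)$, and $\lim_{k\to\infty}p_{\varepsilon,k}=1$. Moreover, $\operatorname{supp}\mathbf p$ is compact if and only if \[\underline{\mathbf p}_\varepsilon:=\inf_{x\in\operatorname{supp}\mathbf p}\mathbf p(B(x,\varepsilon))>0\quad\text{for every }\varepsilon>0,\] and in this case $p_{\varepsilon,k}\ge1-(1-\underline{\mathbf p}_\varepsilon)^k$, so $p_{\varepsilon,k}\to1$ exponentially fast as $k\to\infty$.
   Context: $B(x,\varepsilon):=\{y:\mathsf d(x,y)<\varepsilon\}$. The $(\varepsilon,k)$-subcovering probability is $p_{\varepsilon,k}:=\mathbb P\big(X\in\bigcup_{i=1}^kB(X_i,\varepsilon)\big)$, where $X,X_1,\dots,X_k$ are i.i.d. with law $\mathbf p$ (the union is empty for $k=0$). *)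

From HB Require Import structures.
From mathcomp Require Import all_boot all_order all_algebra.
From mathcomp Require Import all_classical all_reals all_analysis.
Set Implicit Arguments. Unset Strict Implicit. Unset Printing Implicit Defensive.
Import Order.TTheory GRing.Theory Num.Theory.
Local Open Scope classical_set_scope.
Local Open Scope ring_scope.

(* Metric spaces with a distinguished point (needed by [g_sigma_algebraType];
   harmless: a space carrying a probability measure is nonempty). *)
#[short(type="pointedMetricType")]
HB.structure Definition PointedMetric (K : numDomainType) :=
  { M of Metric K M & isPointed M }.

Definition complete_space {R : realType} (S : pointedMetricType R) : Prop :=
  forall F : set_system S, ProperFilter F -> cauchy F -> exists x : S, F --> x.

Definition separable_space {R : realType} (S : pointedMetricType R) : Prop :=
  exists2 D : set S, countable D & dense D.

Notation Borel S := (g_sigma_algebraType (@open S)).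

Definition supp {R : realType} {S : pointedMetricType R}
  (P : probability (Borel S) R) : set S :=
  [set x | forall U : set S, open U -> U x -> (0 < P U)%E].

(* The (k)-fold product measure P^{\otimes k}, on lists of length k,
   defined by iterated integration (as mathcomp's [m1 \x m2]):
   P^{0}(A) = 1_A([::]),  P^{k+1}(A) = \int P^{k}({s | x :: s \in A}) dP(x). *)
Fixpoint prodP {R : realType} {S : pointedMetricType R}
  (P : probability (Borel S) R) (k : nat) (A : set (seq S)) : \bar R :=
  match k with
  | 0 => ((\1_A [::] : R)%:E)
  | k'.+1 => (\int[P]_(x in setT) prodP P k' [set s | A ((x : S) :: s)])%E
  end.

(* The event {X \in \bigcup_{i=1}^k B(X_i, eps)} for (X, X_1, ..., X_k)
   encoded as the list [:: X; X_1; ...; X_k]. *)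
Definition subcover_event {R : realType} {S : pointedMetricType R} (eps : R)
  : set (seq S) :=
  [set s | match s with
           | x :: t => exists i, (i < size t)%N /\ ball (nth x t i) eps x
           | [::] => False
           end].

(* (eps,k)-subcovering probability p_{eps,k} = P(X \in \bigcup_{i<=k} B(X_i,eps))
   with X, X_1, ..., X_k i.i.d. of law P. *)
Definition subcov_prob {R : realType} {S : pointedMetricType R}
  (P : probability (Borel S) R) (eps : R) (k : nat) : \bar R :=
  prodP P k.+1 (subcover_event eps).

Definition min_ball_mass {R : realType} {S : pointedMetricType R}
  (P : probability (Borel S) R) (eps : R) : \bar R :=
  ereal_inf [set P (ball x eps) | x in supp P].

From HB Require Import structures.
From mathcomp Require Import all_boot all_order all_algebra.
From mathcomp Require Import all_classical all_reals all_analysis.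
From mathcomp Require Import measurable_realfun lra ring.
Import Order.TTheory GRing.Theory Num.Theory numFieldNormedType.Exports.
Local Open Scope classical_set_scope.
Local Open Scope ring_scope.

(* Given X = x, the events {X \notin B(X_i, eps)} are independent, each of
   probability 1 - P(B(x, eps)); since the k-fold product measure is iterated
   integration, this gives p_{eps,k} = \int 1 - (1 - P(B(x, eps)))^k dP(x) by
   induction on k. Continuity from below along balls of increasing radius makes
   x |-> P(B(x, eps)) lower semicontinuous, hence Borel. In a separable space
   the support carries all the mass; on it the integrand increases to 1
   (monotone convergence) and is at least 1 - (1 - underline{p}_eps)^k.
   A compact support is covered by finitely many eps/2-balls centred in it,
   each of positive mass, and every eps-ball centred in the support contains
   one of them. Conversely, if underline{p}_r > 0, at most 1/underline{p}_r
   disjoint r-balls centred in the support fit, so the support is covered by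
   finitely many 2r-balls; being closed in a complete space, it is compact. *)

Section metric_balls.
Context {R : realType} {S : metricType R}.
Implicit Types (x y : S) (r e : R).

Lemma metric_ball_open x r : open (ball x r).
Proof.
rewrite openE => y; rewrite ballEmdist /= => xy.
apply/nbhs_ballP; exists (r - mdist x y) => /=; first by rewrite subr_gt0.
move=> z; rewrite !ballEmdist /= => yz.
have := metric_triangle x y z; lra.
Qed.

Lemma ball_subset_ball x y r e : ball x (e - r) y -> ball x r `<=` ball y e.
Proof.
rewrite !ballEmdist /= => xy z /= xz.
have := metric_triangle y x z; rewrite (metric_sym y x); lra.
Qed.

Lemma bigcup_ball_radius_lt x e : \bigcup_k ball x (e - k.+1%:R^-1) = ball x e.
Proof.
apply/seteqP; split => y.
  by move=> [k _]; apply: le_ball; rewrite lerBlDr lerDl.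
rewrite ballEmdist /= => /ltr_add_invr[k xy]; exists k => //.
by rewrite ballEmdist /= ltrBrDr.
Qed.

Lemma dense_ball_within {D U : set S} {x} : dense D -> open U -> U x ->
  exists2 d, D d & exists k : nat, ball d k.+1%:R^-1 x /\ ball d k.+1%:R^-1 `<=` U.
Proof.
move=> dD oU Ux.
have /nbhs_ballP[r /= r0 xrU] : nbhs x U by exact: open_nbhs_nbhs.
have [k kr] : exists k : nat, 0 + k.+1%:R^-1 < r / 2 by apply: ltr_add_invr; lra.
have [d [xd Dd]] : ball x k.+1%:R^-1 `&` D !=set0.
  by apply: dD; [exists x; exact: ballxx | exact: metric_ball_open].
exists d => //; exists k; split; first exact: ball_sym.
move=> y dy; apply: xrU; apply: (@le_ball _ _ _ (k.+1%:R^-1 + k.+1%:R^-1)).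
  by move: kr; rewrite add0r; move: (k.+1%:R^-1) => s; lra.
exact: ball_triangle xd dy.
Qed.

End metric_balls.

Lemma countable_sub_range {T : pointedType} {D : set T} :
  countable D -> exists u : nat -> T, D `<=` range u.
Proof. by move=> /pcard_surjP[u uD]; exists u. Qed.

Lemma ultra_bigcup_seq {T : Type} {I : choiceType} (F : set_system T) (s : seq I)
    (A : I -> set T) :
  UltraFilter F -> F (\bigcup_(i in [set` s]) A i) -> exists i, F (A i).
Proof.
move=> uF; rewrite bigcup_seq; elim: s => [|i s IH].
  by rewrite big_nil => /filter_not_empty.
rewrite big_cons => FU.
have [FAi|FnAi] := in_ultra_setVsetC (A i) uF; first by exists i.
apply: IH; apply: filterS (filterI FU FnAi).
by move=> y [[Ay|]].
Qed.

Lemma complete_totally_bounded_compact {R : realType} {S : pointedMetricType R}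
    (A : set S) :
  complete_space S -> closed A ->
  (forall e, 0 < e -> exists L : seq S, A `<=` \bigcup_(c in [set` L]) ball c e) ->
  compact A.
Proof.
move=> cS cA Atb; rewrite compact_ultra => F uF FA.
have [x Fx] : exists x : S, F --> x.
  apply: (cS F (@ultra_proper _ F uF)); apply: cauchy_exP => e e0.
  have [L AL] := Atb e e0.
  exact: ultra_bigcup_seq uF (filterS AL FA).
by exists x; split => //; exact: (closed_cvg (u_ := id) A cA FA x Fx).
Qed.

Section borel_measurability.
Context {T : ptopologicalType}.

Lemma open_Borel_measurable (U : set T) : open U -> measurable (U : set (Borel T)).
Proof. exact: sub_sigma_algebra. Qed.

Lemma lsc_Borel_measurable {R : realType} (f : T -> R) :
  (forall t, open [set x | t < f x]) -> measurable_fun [set: Borel T] f.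
Proof.
move=> fo; apply: (measurability _ (RGenOInfty.measurableE R)).
move=> _ [_ [t ->] <-]; apply: measurableI => //; apply: open_Borel_measurable.
rewrite (_ : _ @^-1` _ = [set x | t < f x]); first exact: fo.
by apply/seteqP; split => x /=; rewrite in_itv /= andbT.
Qed.

End borel_measurability.

Lemma integral_affine_indic {d} {T : measurableType d} {R : realType}
    (P : probability T R) (A : set T) (a c : R) :
  measurable A -> 0 <= a -> 0 <= c ->
  (\int[P]_(y in setT) (a%:E * (\1_A y)%:E + c%:E) = a%:E * P A + c%:E)%E.
Proof.
move=> mA a0 c0; have mindic : measurable_fun setT (fun y => (\1_A y)%:E : \bar R).
  by apply/measurable_EFinP; exact: measurable_indic.
rewrite ge0_integralD //; last 2 first.
- by move=> y _; apply: mule_ge0; rewrite lee_fin ?indicE //; case: (_ \in _).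
- exact: measurable_funeM.
rewrite ge0_integralZl_EFin // integral_indic // setIT integral_cst //.
by congr (_ + _)%E; rewrite -[RHS]mule1; congr (_ * _)%E; exact: probability_setT.
Qed.

Section subcovering.
Context {R : realType} {S : pointedMetricType R} (P : probability (Borel S) R).
Implicit Types (x y : S) (eps : R).

Lemma ball_Borel_measurable x eps : measurable (ball x eps : set (Borel S)).
Proof. by apply: open_Borel_measurable; exact: metric_ball_open. Qed.

Definition ball_mass eps x : R := fine (P (ball x eps)).

Lemma ball_massE eps x : (ball_mass eps x)%:E = P (ball x eps).
Proof. by rewrite fineK // fin_num_measure //; exact: ball_Borel_measurable. Qed.

Lemma ball_mass_ge0 eps x : 0 <= ball_mass eps x.
Proof. by rewrite -lee_fin ball_massE. Qed.

Lemma ball_mass_le1 eps x : ball_mass eps x <= 1.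
Proof.
by rewrite -lee_fin ball_massE probability_le1 //; exact: ball_Borel_measurable.
Qed.

Lemma measure_ball_gt_smaller_radius x eps t : (t%:E < P (ball x eps))%E ->
  exists2 r, r < eps & (t%:E < P (ball x r))%E.
Proof.
move=> tP.
have cvP : (P (ball x (eps - k.+1%:R^-1)) @[k --> \oo] --> P (ball x eps))%E.
  rewrite -[X in _ --> P X](bigcup_ball_radius_lt x eps).
  apply: nondecreasing_cvg_mu => [k||m n mn]; first exact: ball_Borel_measurable.
    by apply: bigcupT_measurable => k; exact: ball_Borel_measurable.
  apply/subsetPset; apply: le_ball.
  by rewrite lerD2l lerN2 lef_pV2 ?ler_nat ?posrE.
have [N _ NP] := cvP _ (open_nbhs_nbhs (conj (@open_ereal_gt_ereal _ t%:E) tP)).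
exists (eps - N.+1%:R^-1); last exact: (NP N (leqnn N)).
by rewrite ltrBlDr ltrDl invr_gt0.
Qed.

Lemma open_ball_mass_gt eps t : open [set x | t < ball_mass eps x].
Proof.
rewrite openE => x /=; rewrite -lte_fin ball_massE.
move=> /measure_ball_gt_smaller_radius[r reps tr].
apply/nbhs_ballP; exists (eps - r) => /=; first by rewrite subr_gt0.
move=> y xy; rewrite /= -lte_fin ball_massE (lt_le_trans tr) //.
apply: le_measure; rewrite ?inE; [exact: ball_Borel_measurable..|].
exact: ball_subset_ball.
Qed.

Lemma measurable_ball_mass eps : measurable_fun [set: Borel S] (ball_mass eps).
Proof. by apply: lsc_Borel_measurable => t; exact: open_ball_mass_gt. Qed.

Lemma supp_ball_mass_gt0 x eps : supp P x -> 0 < eps -> 0 < ball_mass eps x.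
Proof.
move=> sx e0; rewrite -lte_fin ball_massE.
exact: sx (metric_ball_open _ _) (ballxx _ e0).
Qed.

Lemma not_suppP x : ~ supp P x -> exists U, [/\ open U, U x & P U = 0%E].
Proof.
move=> /existsNP[U /not_implyP[oU /not_implyP[Ux /negP]]].
rewrite lt0e measure_ge0 andbT negbK => /eqP PU0.
by exists U.
Qed.

Lemma open_suppC : open (~` supp P).
Proof.
rewrite openE => x /not_suppP[U [oU Ux PU0]].
apply: filterS (open_nbhs_nbhs (conj oU Ux)) => y Uy sy.
by have := sy U oU Uy; rewrite PU0 ltxx.
Qed.

Lemma closed_supp : closed (supp P).
Proof. by rewrite -[supp P]setCK; exact: open_closedC open_suppC. Qed.

Lemma measurable_supp : measurable (supp P : set (Borel S)).
Proof.
rewrite -[supp P]setCK; apply: measurableC.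
exact: open_Borel_measurable open_suppC.
Qed.

Lemma prodP_setT k : prodP P k setT = 1%E.
Proof.
elim: k => [|k IH] /=; first by rewrite indicE mem_set.
under eq_integral do rewrite IH.
by rewrite integral_cst // mul1e; exact: probability_setT.
Qed.

Definition covered_event eps x : set (seq S) := [set s | subcover_event eps (x :: s)].

Lemma covered_event_cons_in eps x y :
  ball y eps x -> [set s | covered_event eps x (y :: s)] = setT.
Proof. by move=> yx; apply/seteqP; split => // s _; exists 0%N. Qed.

Lemma covered_event_cons_out eps x y :
  ~ ball y eps x -> [set s | covered_event eps x (y :: s)] = covered_event eps x.
Proof.
move=> yx; apply/seteqP; split => s /=.
  by move=> [[|i] [si xi]]; [case: yx | exists i].
by move=> [i [si xi]]; exists i.+1.
Qed.

Definition cover_prob eps k x : R := 1 - (1 - ball_mass eps x) ^+ k.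

Lemma cover_prob_ge0 eps k x : 0 <= cover_prob eps k x.
Proof.
have := ball_mass_ge0 eps x; have := ball_mass_le1 eps x.
by rewrite subr_ge0 => *; apply: exprn_ile1; lra.
Qed.

Lemma cover_prob_le1 eps k x : cover_prob eps k x <= 1.
Proof.
have := ball_mass_le1 eps x.
by rewrite lerBlDr lerDl => *; apply: exprn_ge0; lra.
Qed.

Lemma prodP_covered_event eps k x :
  prodP P k (covered_event eps x) = (cover_prob eps k x)%:E.
Proof.
elim: k => [|k IH] /=.
  by rewrite indicE memNset ?/cover_prob ?expr0 ?subrr //; move=> [i []].
set q := cover_prob eps k x.
(* Integrate out the first sample y: the event is sure if x is within eps of y,
   and otherwise it is the same event for the remaining k samples. *)
transitivity (\int[P]_(y in setT) ((1 - q)%:E * (\1_(ball x eps) y)%:E + q%:E))%E.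
  apply: eq_integral => y _; have [yx|yx] := pselect (ball y eps x).
    rewrite covered_event_cons_in // prodP_setT indicE mem_set; last exact: ball_sym.
    by rewrite -EFinM -EFinD mulr1 subrK.
  rewrite covered_event_cons_out // IH indicE memNset ?mule0 ?add0e //.
  by move=> /ball_sym.
rewrite (integral_affine_indic _ _ _ _ (ball_Borel_measurable x eps)); last 2 first.
- by rewrite subr_ge0; exact: cover_prob_le1.
- exact: cover_prob_ge0.
by rewrite -ball_massE -EFinM -EFinD /q /cover_prob exprS; congr EFin; ring.
Qed.

Lemma subcov_probE eps k :
  subcov_prob P eps k = (\int[P]_(x in setT) (cover_prob eps k x)%:E)%E.
Proof. by apply: eq_integral => x _; exact: prodP_covered_event. Qed.

Lemma measurable_cover_prob eps k :
  measurable_fun [set: Borel S] (fun x => (cover_prob eps k x)%:E).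
Proof.
apply/measurable_EFinP; apply: measurable_funB => //.
by apply: measurable_funX; apply: measurable_funB => //; exact: measurable_ball_mass.
Qed.

Lemma nondecreasing_cover_prob eps x :
  {homo cover_prob eps ^~ x : n m / (n <= m)%N >-> n <= m}.
Proof.
move=> n m nm; rewrite lerD2l lerN2; apply: ler_wiXn2l => //.
  by rewrite subr_ge0 ball_mass_le1.
by rewrite lerBlDr lerDl ball_mass_ge0.
Qed.

Lemma cover_prob_cvg1 eps x :
  0 < ball_mass eps x -> (fun k => cover_prob eps k x) @ \oo --> (1 : R).
Proof.
move=> b0; rewrite -[X in _ --> X]subr0; apply: cvgB; first exact: cvg_cst.
by apply: cvg_expr; rewrite ger0_norm ?subr_ge0 ?ball_mass_le1 //; lra.
Qed.

Lemma subcov_prob_ge0 eps k : (0 <= subcov_prob P eps k)%E.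
Proof.
by rewrite subcov_probE integral_ge0 // => x _; rewrite lee_fin cover_prob_ge0.
Qed.

Lemma subcov_prob_le1 eps k : (subcov_prob P eps k <= 1)%E.
Proof.
rewrite subcov_probE; apply: (@le_trans _ _ (\int[P]_(x in setT) cst 1%E x)%E).
  apply: ge0_le_integral => //; first by move=> x _; rewrite lee_fin cover_prob_ge0.
    exact: measurable_cover_prob.
  by move=> x _; rewrite lee_fin cover_prob_le1.
by rewrite integral_cst // mul1e; exact: probability_le1.
Qed.

Lemma subcov_prob0 eps : subcov_prob P eps 0 = 0%E.
Proof.
rewrite subcov_probE (eq_integral (cst 0%E)) ?integral0 // => x _.
by rewrite /cover_prob expr0 subrr.
Qed.

Lemma subcov_prob1 eps :
  subcov_prob P eps 1 = (\int[P]_(x in setT) P (ball (x : S) eps))%E.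
Proof.
rewrite subcov_probE; apply: eq_integral => x _.
by rewrite /cover_prob expr1 opprB addrC subrK ball_massE.
Qed.

Lemma min_ball_mass_ge0 eps : (0 <= min_ball_mass P eps)%E.
Proof. by apply/ereal_infP => _ [x _ <-]. Qed.

Lemma min_ball_mass_le eps {x} : supp P x -> (min_ball_mass P eps <= P (ball x eps))%E.
Proof. by move=> sx; apply: ereal_inf_lbound; exists x. Qed.

Lemma compact_min_ball_mass_gt0 eps :
  compact (supp P) -> 0 < eps -> (0 < min_ball_mass P eps)%E.
Proof.
rewrite compact_cover => cpt e0.
have e2 : 0 < eps / 2 by apply: divr_gt0.
have suppU : supp P `<=` \bigcup_(c in supp P) ball c (eps / 2).
  by move=> x sx; exists x => //; exact: ballxx.
have [C Csupp cover] := cpt S (supp P) (ball ^~ (eps / 2))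
  (fun c _ => metric_ball_open c _) suppU.
pose m := (\big[Order.min/1%E]_(c <- finmap.enum_fset C | c \in supp P)
  P (ball c (eps / 2)))%E.
have m0 : (0 < m)%E.
  apply: lt_bigmin => [|c]; first by rewrite lte_fin.
  by rewrite inE => sc; exact: sc _ (metric_ball_open c _) (ballxx c e2).
apply: (lt_le_trans m0); apply/ereal_infP => _ [x sx <-].
have [c /= cC cx] := cover x sx.
apply: (@le_trans _ _ (P (ball c (eps / 2)))).
  apply: ge_bigmin_seq; first exact: cC.
  by have := Csupp c cC; rewrite !inE.
apply: le_measure; rewrite ?inE; [exact: ball_Borel_measurable..|].
move=> y cy; apply: (@le_ball _ _ _ (eps / 2 + eps / 2)); first lra.
exact: ball_triangle (ball_sym cx) cy.
Qed.

Section separable.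
Hypothesis S_separable : separable_space S.

Lemma measure_suppC : P (~` supp P) = 0%E.
Proof.
have [D cD dD] := S_separable; have [u Du] := countable_sub_range cD.
pose B n k : set (Borel S) := ball (u n) k.+1%:R^-1.
pose N n k : set (Borel S) := if P (B n k) == 0%E then B n k else set0.
have Nnegl n k : P.-negligible (N n k).
  rewrite /N; case: eqP => [PB0|_]; last exact: negligible_set0.
  by apply/negligibleP => //; exact: ball_Borel_measurable.
apply/negligibleP; first exact: measurableC measurable_supp.
apply: negligibleS (negligible_bigcup (fun n => negligible_bigcup (Nnegl n))).
(* A point outside the support lies in a null ball B(u n, 1/(k+1)). *)
move=> x /not_suppP[U [oU Ux PU0]].
have [d Dd [k [dx dU]]] := dense_ball_within dD oU Ux.
have [n _ und] := Du d Dd.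
exists n => //; exists k => //; rewrite /N /B und ifT //.
rewrite -measure_le0 -PU0 le_measure // inE; first exact: ball_Borel_measurable.
exact: open_Borel_measurable.
Qed.

Lemma measure_supp : P (supp P) = 1%E.
Proof.
have := probability_setC P (measurableC measurable_supp).
by rewrite setCK measure_suppC sube0.
Qed.

Lemma supp_neq0 : supp P !=set0.
Proof.
apply/set0P/negP => /eqP supp0.
by have := measure_supp; rewrite supp0 measure0 => /eqP; rewrite eq_sym onee_eq0.
Qed.

Lemma integral_cst_supp (c : \bar R) : (\int[P]_(x in supp P) cst c x = c)%E.
Proof.
rewrite integral_cst; last exact: measurable_supp.
by rewrite -[RHS]mule1; congr (_ * _)%E; exact: measure_supp.
Qed.

Lemma integral_supp (f : S -> \bar R) : measurable_fun [set: Borel S] f ->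
  (\int[P]_(x in setT) f x = \int[P]_(x in supp P) f x)%E.
Proof.
move=> mf; have msupp := measurable_supp; have msuppC := measurableC msupp.
rewrite -(setUv (supp P)) integral_setU //; last 2 first.
- by rewrite setUv.
- exact/disj_setPCl.
rewrite (@null_set_integral _ _ _ P (~` supp P)) ?adde0 //; last exact: measure_suppC.
exact: measurable_funS mf.
Qed.

Lemma min_ball_mass_fin_num eps : min_ball_mass P eps \is a fin_num.
Proof.
have [x sx] := supp_neq0.
rewrite ge0_fin_numE ?min_ball_mass_ge0 //.
by rewrite (le_lt_trans (min_ball_mass_le eps sx)) // -ball_massE ltry.
Qed.

Lemma fine_min_ball_mass_le eps {x} :
  supp P x -> fine (min_ball_mass P eps) <= ball_mass eps x.
Proof.
move=> sx; rewrite -lee_fin fineK ?min_ball_mass_fin_num // ball_massE.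
exact: min_ball_mass_le.
Qed.

Lemma subcov_prob_cvg1 eps : 0 < eps -> (fun k => subcov_prob P eps k) @ \oo --> 1%E.
Proof.
move=> e0.
have -> : (fun k => subcov_prob P eps k) =
    (fun k => \int[P]_(x in supp P) (cover_prob eps k x)%:E)%E.
  apply/funext => k; rewrite subcov_probE integral_supp //.
  exact: measurable_cover_prob.
have lim1 : (\int[P]_(x in supp P) limn (fun k => (cover_prob eps k x)%:E))%E = 1%E.
  rewrite -[RHS](integral_cst_supp 1%E).
  apply: eq_integral => x; rewrite inE => sx; apply: cvg_lim => //.
  apply: cvg_EFin; first exact: nearW.
  exact/cover_prob_cvg1/supp_ball_mass_gt0.
rewrite -lim1; apply: cvg_monotone_convergence => //.
- exact: measurable_supp.
- by move=> k; apply: measurable_funS (measurable_cover_prob eps k).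
- by move=> k x _; rewrite lee_fin cover_prob_ge0.
- by move=> x _ n m nm; rewrite lee_fin nondecreasing_cover_prob.
Qed.

Lemma subcov_prob_ge_min_ball_mass eps k :
  ((1 - (1 - fine (min_ball_mass P eps)) ^+ k)%:E <= subcov_prob P eps k)%E.
Proof.
have [x0 sx0] := supp_neq0.
set m := fine (min_ball_mass P eps).
have m0 : 0 <= m by apply: fine_ge0; exact: min_ball_mass_ge0.
have m1 : m <= 1 := le_trans (fine_min_ball_mass_le eps sx0) (ball_mass_le1 eps x0).
rewrite subcov_probE integral_supp; last exact: measurable_cover_prob.
rewrite -[X in (X <= _)%E](integral_cst_supp (1 - (1 - m) ^+ k)%:E).
apply: ge0_le_integral => //.
- exact: measurable_supp.
- by move=> x _; rewrite lee_fin subr_ge0 exprn_ile1 //; lra.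
- exact: measurable_funS (measurable_cover_prob eps k).
- move=> x sx; rewrite lee_fin lerD2l lerN2 lerXn2r ?nnegrE //; try lra.
  + by rewrite subr_ge0 ball_mass_le1.
  + by have := fine_min_ball_mass_le eps sx; rewrite -/m; lra.
Qed.

Lemma measurable_bigcup_balls (L : seq S) r :
  measurable (\bigcup_(c in [set` L]) (ball c r : set (Borel S))).
Proof.
apply: fin_bigcup_measurable => [|c _]; first exact: finite_seq.
exact: ball_Borel_measurable.
Qed.

Lemma no_ball_cover_packing r n :
  ~ (exists L : seq S, supp P `<=` \bigcup_(c in [set` L]) ball c (r + r)) ->
  exists L : seq S,
    ((n%:R * fine (min_ball_mass P r))%:E <= P (\bigcup_(c in [set` L]) ball c r))%E.
Proof.
(* Greedily add an uncovered point of the support: its r-ball misses the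
   r-balls around the previous points. *)
move=> noL; elim: n => [|n [L Ln]]; first by exists [::]; rewrite mul0r measure_ge0.
have /existsNP[x /not_implyP[sx nx]] :
    ~ supp P `<=` \bigcup_(c in [set` L]) ball c (r + r).
  by move=> sL; apply: noL; exists L.
have disj : ball x r `&` \bigcup_(c in [set` L]) ball c r = set0.
  apply/seteqP; split => // y [xy [c cL cy]]; apply: nx; exists c => //.
  exact: ball_triangle cy (ball_sym xy).
exists (x :: L).
have -> : \bigcup_(c in [set` x :: L]) ball c r =
    ball x r `|` \bigcup_(c in [set` L]) ball c r by rewrite !bigcup_seq big_cons.
rewrite measureU //; [|exact: ball_Borel_measurable|exact: measurable_bigcup_balls].
rewrite -natr1 mulrDl mul1r EFinD addeC leeD //.
by rewrite fineK ?min_ball_mass_fin_num //; exact: min_ball_mass_le.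
Qed.

Lemma min_ball_mass_gt0_ball_cover r : (0 < min_ball_mass P r)%E ->
  exists L : seq S, supp P `<=` \bigcup_(c in [set` L]) ball c (r + r).
Proof.
set m := fine (min_ball_mass P r) => mpos.
have m0 : 0 < m by rewrite -lte_fin fineK ?min_ball_mass_fin_num.
apply: contrapT => /(no_ball_cover_packing r (Num.Def.trunc m^-1).+1)[L Ln].
have := le_trans Ln (probability_le1 P (measurable_bigcup_balls L r)).
rewrite lee_fin leNgt => /negP; apply.
by rewrite -ltr_pdivrMr // div1r truncnS_gt.
Qed.

Lemma min_ball_mass_gt0_compact : complete_space S ->
  (forall eps, 0 < eps -> (0 < min_ball_mass P eps)%E) -> compact (supp P).
Proof.
move=> cS pos; apply: complete_totally_bounded_compact cS closed_supp _ => e e0.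
have [L suppL] : exists L : seq S,
    supp P `<=` \bigcup_(c in [set` L]) ball c (e / 2 + e / 2).
  by apply: min_ball_mass_gt0_ball_cover; apply: pos; rewrite divr_gt0.
by exists L; rewrite [e]splitr.
Qed.

End separable.
End subcovering.

Theorem lemma3p8 (R : realType) (S : pointedMetricType R)
  (S_complete : complete_space S) (S_separable : separable_space S)
  (P : probability (Borel S) R) :
  (forall (eps : R), 0 < eps ->
     (forall k : nat, (0 <= subcov_prob P eps k <= 1)%E)
     /\ subcov_prob P eps 0 = 0%E
     /\ subcov_prob P eps 1 = (\int[P]_(x in setT) P (ball (x : S) eps))%E
     /\ (fun k => subcov_prob P eps k) @ \oo --> 1%E)
  /\ (compact (supp P) <-> forall eps : R, 0 < eps -> (0 < min_ball_mass P eps)%E)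
  /\ (compact (supp P) ->
      forall (eps : R), 0 < eps -> forall k : nat,
        ((1 - (1 - fine (min_ball_mass P eps)) ^+ k)%:E <= subcov_prob P eps k)%E).
Proof.
split; [|split].
- move=> eps e0; split; [|split; [|split]].
  + by move=> k; rewrite subcov_prob_ge0 subcov_prob_le1.
  + exact: subcov_prob0.
  + exact: subcov_prob1.
  + exact: subcov_prob_cvg1.
- split; first by move=> cpt eps; exact: compact_min_ball_mass_gt0.
  exact: min_ball_mass_gt0_compact.
- by move=> _ eps _ k; exact: subcov_prob_ge_min_ball_mass.
Qed.
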